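(* Let $i\in\{1,\dots,d\}$ and $I\subseteq\{1,\dots,d\}$ with $|I|=i$, and let $L_I=\operatorname{span}\{e_k:k\in I\}$. Then, restricting to the coordinates in $I$, $T_d\cap L_I=S\big(\tfrac{1}{d-i+1},1,\dots,1\big)\subseteq\mathbb{R}^I$, where the weight vector has $i+1$ entries.
   Context: $T_d=\operatorname{conv}(-\mathbb{1}_d,e_1,\dots,e_d)\subseteq\mathbb{R}^d$ is the standard terminal simplex. For $\omega=(\omega_0,\dots,\omega_n)\in\mathbb{R}^{n+1}_{>0}$, $S(\omega)=\operatorname{conv}(-\omega_0\mathbb{1}_n,\omega_1e_1,\dots,\omega_ne_n)\subseteq\mathbb{R}^n$. *)

From HB Require Import structures.
From mathcomp Require Import all_boot all_order all_algebra.
Set Implicit Arguments. Unset Strict Implicit. Unset Printing Implicit Defensive.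
Import Order.TTheory GRing.Theory Num.Theory.
Local Open Scope ring_scope.

(* Points of R^n are row vectors 'rV[R]_n; coordinates are 0-indexed,
   so the paper's e_1..e_n are delta_mx 0 j for j : 'I_n. *)

Definition ebasis (R : realFieldType) (n : nat) (j : 'I_n) : 'rV[R]_n :=
  delta_mx 0 j.

Definition conv (R : realFieldType) (n k : nat) (v : 'I_k -> 'rV[R]_n)
  (x : 'rV[R]_n) : Prop :=
  exists lam : 'I_k -> R,
    (forall j, 0 <= lam j) /\ \sum_(j < k) lam j = 1 /\
    x = \sum_(j < k) lam j *: v j.

(* vertices of S(omega): index 0 |-> -omega_0 * 1_n, index j+1 |-> omega_{j+1} e_{j+1} *)
Definition Svert (R : realFieldType) (n : nat) (w : 'I_n.+1 -> R)
  (k : 'I_n.+1) : 'rV[R]_n :=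
  match unlift ord0 k with
  | Some j => w k *: ebasis R j
  | None => - (w ord0 *: const_mx 1)
  end.

Definition Ssimplex (R : realFieldType) (n : nat) (w : 'I_n.+1 -> R) :
  'rV[R]_n -> Prop := conv (Svert w).

Definition Tvert (R : realFieldType) (d : nat) (k : 'I_d.+1) : 'rV[R]_d :=
  match unlift ord0 k with
  | Some j => ebasis R j
  | None => - const_mx 1
  end.

Definition Tsimplex (R : realFieldType) (d : nat) : 'rV[R]_d -> Prop :=
  conv (@Tvert R d).

Definition coordspace (R : realFieldType) (d : nat) (I : {set 'I_d}) :
  {vspace 'rV[R]_d} :=
  (<<[seq ebasis R k | k <- enum I]>>)%VS.

(* restriction of x in R^d to the coordinates in I (listed in increasing
   order), as a vector of R^i where #|I| = i *)
Definition restrict (R : realFieldType) (d i : nat) (I : {set 'I_d})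
  (hI : #|I| = i) (x : 'rV[R]_d) : 'rV[R]_i :=
  \row_(j < i) x 0 (enum_val (cast_ord (esym hI) j)).

Definition wI (R : realFieldType) (d i : nat) (k : 'I_i.+1) : R :=
  if k == ord0 then ((d - i + 1)%:R)^-1 else 1.

From mathcomp Require Import all_boot all_order all_algebra.
From mathcomp Require Import lra.
Set Implicit Arguments. Unset Strict Implicit. Unset Printing Implicit Defensive.
Import Order.TTheory GRing.Theory Num.Theory.
Local Open Scope ring_scope.

(* A point y of R^n lies in S(w_0, 1, ..., 1) iff for some s >= 0 (w_0 times
   the weight of the apex) every y_j + s is nonnegative and
   (1/w_0 + n) s + sum_j y_j = 1; the y_j + s are then the weights of the
   other vertices.  For T_d this reads (d+1) s + sum_k x_k = 1, and for
   w_0 = 1/(d-i+1) in R^i it reads the same, because (d-i+1) + i = d+1.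
   A point x of L_I vanishes outside I, where x_k + s >= 0 is automatic, and
   has the same coordinate sum as its restriction to I; hence x lies in T_d
   iff its restriction lies in S(1/(d-i+1), 1, ..., 1). *)

Section Simplices.
Variable R : realFieldType.

Lemma conv_ext n k (v v' : 'I_k -> 'rV[R]_n) x :
  v =1 v' -> conv v x <-> conv v' x.
Proof.
move=> ev; split=> -[lam [lam_ge0 [lam_sum ->]]]; exists lam;
  by do 2!split=> //; apply: eq_bigr => j _; rewrite ev.
Qed.

Lemma sum_scale_ebasis n (c : 'I_n -> R) : \sum_j c j *: ebasis R j = \row_j c j.
Proof. by rewrite [RHS]row_sum_delta; apply: eq_bigr => j _; rewrite mxE. Qed.

Lemma sum_scale_Svert n (w : 'I_n.+1 -> R) (lam : 'I_n.+1 -> R) :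
  \sum_k lam k *: Svert w k =
  \row_j (lam (lift ord0 j) * w (lift ord0 j) - lam ord0 * w ord0).
Proof.
rewrite big_ord_recl /Svert unlift_none.
under eq_bigr do rewrite liftK scalerA.
by rewrite sum_scale_ebasis; apply/rowP => j; rewrite !mxE; lra.
Qed.

Lemma SsimplexP n (w : 'I_n.+1 -> R) :
  0 < w ord0 -> (forall j, 0 < w (lift ord0 j)) -> forall y : 'rV[R]_n,
  Ssimplex w y <-> exists s, [/\ 0 <= s, forall j, 0 <= y 0 j + s &
    s / w ord0 + \sum_j (y 0 j + s) / w (lift ord0 j) = 1].
Proof.
move=> w0_gt0 w_gt0 y; split.
  move=> [lam [lam_ge0 [lam_sum ->]]]; exists (lam ord0 * w ord0).
  have yE j : (\sum_k lam k *: Svert w k) 0 j + lam ord0 * w ord0 =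
              lam (lift ord0 j) * w (lift ord0 j).
    by rewrite sum_scale_Svert mxE; lra.
  split; first by rewrite mulr_ge0 // ltW.
    by move=> j; rewrite yE mulr_ge0 // ltW.
  under eq_bigr do rewrite yE mulfK ?gt_eqF //.
  by rewrite mulfK ?gt_eqF // -big_ord_recl.
move=> [s [s_ge0 ys_ge0 s_sum]].
pose lam k := if unlift ord0 k is Some j then (y 0 j + s) / w k else s / w ord0.
exists lam; split.
  by move=> k; rewrite /lam; case: unliftP => [j ->|_];
    rewrite divr_ge0 // ltW.
split; first by rewrite big_ord_recl /lam unlift_none; under eq_bigr do rewrite liftK.
rewrite sum_scale_Svert; apply/rowP => j; rewrite !mxE /lam liftK unlift_none.
by rewrite !divfK ?gt_eqF //; lra.
Qed.

Lemma Ssimplex_unit_weightsP n (w : 'I_n.+1 -> R) :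
  0 < w ord0 -> (forall j, w (lift ord0 j) = 1) -> forall y : 'rV[R]_n,
  Ssimplex w y <-> exists s, [/\ 0 <= s, forall j, 0 <= y 0 j + s &
    ((w ord0)^-1 + n%:R) * s + \sum_j y 0 j = 1].
Proof.
move=> w0_gt0 w1 y; rewrite SsimplexP // => [|j]; last by rewrite w1.
have sumE s : s / w ord0 + \sum_j (y 0 j + s) / w (lift ord0 j) =
              ((w ord0)^-1 + n%:R) * s + \sum_j y 0 j.
  under eq_bigr do rewrite w1 divr1.
  by rewrite big_split /= sumr_const card_ord mulrDl mulr_natl mulrC; lra.
by split=> -[s [s_ge0 ys_ge0 s_sum]]; exists s; rewrite sumE in s_sum *.
Qed.

Lemma TsimplexP d (x : 'rV[R]_d) :
  Tsimplex x <-> exists s, [/\ 0 <= s, forall k, 0 <= x 0 k + s &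
    d.+1%:R * s + \sum_k x 0 k = 1].
Proof.
have -> : Tsimplex x <-> Ssimplex (fun _ => 1) x.
  apply: conv_ext => k; rewrite /Tvert /Svert.
  by case: unlift => [j|] /=; rewrite scale1r.
by rewrite Ssimplex_unit_weightsP ?ltr01 // invr1 addrC natr1.
Qed.

Lemma Ssimplex_wIP d i (y : 'rV[R]_i) : (i <= d)%N ->
  Ssimplex (@wI R d i) y <-> exists s, [/\ 0 <= s, forall j, 0 <= y 0 j + s &
    d.+1%:R * s + \sum_j y 0 j = 1].
Proof.
move=> le_id; rewrite Ssimplex_unit_weightsP /wI ?eqxx ?invr_gt0 ?ltr0n ?addn1 //.
by rewrite invrK -natrD addSn subnK.
Qed.

End Simplices.

Section CoordinateSubspace.
Variables (R : realFieldType) (d i : nat) (I : {set 'I_d}) (hI : #|I| = i).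

Definition Icoord (j : 'I_i) : 'I_d := enum_val (cast_ord (esym hI) j).

Lemma Icoord_in j : Icoord j \in I. Proof. exact: enum_valP. Qed.

Lemma Icoord_inj : injective Icoord.
Proof. by move=> j j' /enum_val_inj /cast_ord_inj. Qed.

Lemma Icoord_onto k : k \in I -> exists j, Icoord j = k.
Proof.
move=> kI; exists (cast_ord hI (enum_rank_in kI k)).
by rewrite /Icoord cast_ordK enum_rankK_in.
Qed.

Lemma restrictE (x : 'rV[R]_d) j : restrict hI x 0 j = x 0 (Icoord j).
Proof. by rewrite mxE. Qed.

Lemma coordspace_supp (x : 'rV[R]_d) k :
  x \in coordspace R I -> k \notin I -> x 0 k = 0.
Proof.
move=> /coord_span-> kI; rewrite summxE big1 // => j _.
have j_lt : (j < size (enum I))%N by rewrite -cardE.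
rewrite mxE /= (nth_map k) // /ebasis mxE /=.
have : nth k (enum I) j \in I by rewrite -mem_enum mem_nth.
by case: eqP => [<-|_]; rewrite ?(negbTE kI) ?mulr0.
Qed.

Lemma sum_restrict (x : 'rV[R]_d) : x \in coordspace R I ->
  \sum_k x 0 k = \sum_j restrict hI x 0 j.
Proof.
move=> xI; rewrite (bigID (mem I)) /= [X in _ + X]big1 ?addr0; last first.
  by move=> k; apply: coordspace_supp.
rewrite big_enum_val (reindex (cast_ord (esym hI))) /=.
  by apply: eq_bigr => j _; rewrite restrictE.
by exists (cast_ord hI) => j _; rewrite ?cast_ordK ?cast_ordKV.
Qed.

Lemma restrict_shift_ge0 (x : 'rV[R]_d) s : x \in coordspace R I -> 0 <= s ->
  (forall k, 0 <= x 0 k + s) <-> (forall j, 0 <= restrict hI x 0 j + s).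
Proof.
move=> xI s_ge0; split=> [xs_ge0 j|ys_ge0 k]; first by rewrite restrictE.
have [/Icoord_onto[j <-]|kI] := boolP (k \in I); first by rewrite -restrictE.
by rewrite coordspace_supp ?add0r.
Qed.

Definition extend (y : 'rV[R]_i) : 'rV[R]_d := \sum_j y 0 j *: ebasis R (Icoord j).

Lemma extend_coordspace y : extend y \in coordspace R I.
Proof.
apply: memv_suml => j _; apply/memvZ/memv_span.
by apply: map_f; rewrite mem_enum Icoord_in.
Qed.

Lemma restrict_extend y : restrict hI (extend y) = y.
Proof.
apply/rowP => j; rewrite restrictE summxE (bigD1 j) //= big1 => [|j' ne_j'j].
  by rewrite !mxE !eqxx mulr1 addr0.
by rewrite !mxE (inj_eq Icoord_inj) eq_sym (negbTE ne_j'j) andbF mulr0.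
Qed.

Lemma Tsimplex_coordspace (x : 'rV[R]_d) : (i <= d)%N -> x \in coordspace R I ->
  Tsimplex x <-> Ssimplex (@wI R d i) (restrict hI x).
Proof.
move=> le_id xI; rewrite TsimplexP Ssimplex_wIP // sum_restrict //.
by split=> -[s [s_ge0 shift_ge0 s_sum]]; exists s;
  split=> //; apply/(restrict_shift_ge0 xI s_ge0).
Qed.

End CoordinateSubspace.

Theorem corollary5p5 (R : realFieldType) (d i : nat) (I : {set 'I_d})
  (hi1 : (1 <= i)%N) (hid : (i <= d)%N) (hI : #|I| = i) :
  forall y : 'rV[R]_i,
    Ssimplex (@wI R d i) y <->
    exists x : 'rV[R]_d,
      [/\ Tsimplex x, x \in coordspace R I & restrict hI x = y].
Proof.
move=> y; split=> [Sy | [x [Tx xI <-]]]; last by rewrite -Tsimplex_coordspace.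
exists (extend hI y); split; rewrite ?extend_coordspace ?restrict_extend //.
by rewrite (Tsimplex_coordspace hI) ?extend_coordspace // restrict_extend.
Qed.
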